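(* Let $(\Omega,\mathcal{F},P_0)$ be a complete probability space, $\epsilon\in(0,1)$, $\mathcal{C}\subseteq\mathcal{F}$ a sub-$\sigma$-algebra, and $\rho:L^{2+\epsilon}_{\mathcal{F}}(\Omega,P_0)\to\mathbb{R}$ a sublinear operator with representation set $\mathcal{P}$. Suppose $\rho$ is stable and proper. Then for any $P\in\mathcal{P}$ and any integrable random variable $\xi$ (so that the expectations below are well defined), there exists $\bar P\in\mathcal{P}$ such that $$E_{\bar P}[\xi]=E_{P_0}\big[E_P[\xi\mid\mathcal{C}]\big].$$
   Context: A sublinear operator is a map $\rho:L^{2+\epsilon}_{\mathcal{F}}(\Omega,P_0)\to\mathbb{R}$ that is monotone ($\xi_1\ge\xi_2\Rightarrow\rho(\xi_1)\ge\rho(\xi_2)$), constant preserving ($\rho(c)=c$), sub-additive ($\rho(\xi_1+\xi_2)\le\rho(\xi_1)+\rho(\xi_2)$) and positively homogeneous ($\rho(\lambda\xi)=\lambda\rho(\xi)$ for $\lambda\ge0$). Its representation set $\mathcal{P}$ is the family of all linear expectations (identified with probability measures $P$) dominated by $\rho$, so that $\rho(\xi)=\max_{P\in\mathcal{P}}E_P[\xi]$. For $P\in\mathcal{P}$ write $f^P=\frac{dP}{dP_0}$ and $\mathcal{D}=\{f^P:P\in\mathcal{P}\}$. $\rho$ is proper if every $P\in\mathcal{P}$ is equivalent to $P_0$. $\rho$ (equivalently $\mathcal{P}$) is stable if for each $P\in\mathcal{P}$, with $f^P_{\mathcal{C}}:=E_{P_0}[f^P\mid\mathcal{C}]$, the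 random variable $f^P/f^P_{\mathcal{C}}$ lies in $\mathcal{D}$. Standing assumption: $\mathcal{D}$ is norm-bounded in $L^{1+\frac{2}{\epsilon}}_{\mathcal{F}}(P_0)$ and compact for the weak topology $\sigma(L^{1+\frac{2}{\epsilon}}(P_0),L^{1+\frac{\epsilon}{2}}(P_0))$. *)

From HB Require Import structures.
From mathcomp Require Import all_boot all_order all_algebra.
From mathcomp Require Import all_classical all_reals all_analysis.
Set Implicit Arguments. Unset Strict Implicit. Unset Printing Implicit Defensive.
Import Order.TTheory GRing.Theory Num.Theory.
Local Open Scope classical_set_scope.
Local Open Scope ring_scope.

Section Defs.
Context {R : realType} {d : measure_display} {T : measurableType d}.
Variable P0 : probability T R.

Definition inLp (p : R) (f : T -> R) : Prop :=
  measurable_fun setT f /\ (Lnorm P0 p%:E (EFin \o f) < +oo)%E.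

Definition is_sub_sigma_algebra (C : set (set T)) : Prop :=
  sigma_algebra setT C /\ C `<=` measurable.

Definition C_measurable (C : set (set T)) (eta : T -> R) : Prop :=
  forall B : set R, measurable B -> C (eta @^-1` B).

(* sublinear operator rho on L^{p}(P0) (functions identified P0-a.e.;
   monotonicity is with respect to the P0-a.e. order) *)
Definition sublinear_op (p : R) (rho : (T -> R) -> R) : Prop :=
  [/\ (forall xi1 xi2, inLp p xi1 -> inLp p xi2 ->
         (\forall x \ae P0, xi2 x <= xi1 x) -> rho xi2 <= rho xi1),
      (forall c : R, rho (cst c) = c),
      (forall xi1 xi2, inLp p xi1 -> inLp p xi2 ->
         rho (xi1 \+ xi2) <= rho xi1 + rho xi2) &
      (forall (lam : R) xi, 0 <= lam -> inLp p xi ->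
         rho (fun x => lam * xi x) = lam * rho xi)].

(* f is the density dP/dP0 of a probability measure P << P0 *)
Definition is_density (f : T -> R) : Prop :=
  [/\ measurable_fun setT f,
      (\forall x \ae P0, 0 <= f x) &
      (\int[P0]_x (f x)%:E = 1)%E].

(* The set D = { f^P : P in the representation set of rho }:
   densities of the probability measures P (P << P0) whose expectation
   E_P[xi] = E_{P0}[f xi] is dominated by rho on L^{2+eps}(P0). *)
Definition repD (eps : R) (rho : (T -> R) -> R) : set (T -> R) :=
  [set f | is_density f /\
     forall xi, inLp (2 + eps) xi ->
       P0.-integrable setT (fun x => (xi x * f x)%:E) /\
       (\int[P0]_x (xi x * f x)%:E <= (rho xi)%:E)%E].

(* eta is a version of the conditional expectation E_P[xi | C], where
   P is the probability measure with density f w.r.t. P0 *)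
Definition cond_exp (C : set (set T)) (f xi eta : T -> R) : Prop :=
  [/\ C_measurable C eta,
      P0.-integrable setT (fun x => (eta x * f x)%:E) &
      forall A, C A ->
        (\int[P0]_(x in A) (eta x * f x)%:E =
         \int[P0]_(x in A) (xi x * f x)%:E)%E].

(* stability: for f = f^P in D and f_C = E_{P0}[f | C], f / f_C is in D *)
Definition stable (eps : R) (C : set (set T)) (rho : (T -> R) -> R) : Prop :=
  forall f, repD eps rho f ->
    exists2 fC, cond_exp C (cst 1) f fC & repD eps rho (fun x => f x / fC x).

Definition proper_op (eps : R) (rho : (T -> R) -> R) : Prop :=
  forall f, repD eps rho f ->
    forall A, measurable A ->
      (P0 A = 0 <-> \int[P0]_(x in A) (f x)%:E = 0)%E.

(* weak compactness of a set S of L^q functions for sigma(L^q, L^q'):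
   every proper filter containing S has a cluster point g in S for the
   weak topology (basic neighbourhoods given by finitely many functionals
   h in L^q'). *)
Definition weakly_compact (q q' : R) (S : set (T -> R)) : Prop :=
  forall F : set_system (T -> R), ProperFilter F -> F S ->
    exists2 g, S g &
      forall A, F A -> forall (hs : seq (T -> R)) (del : R), 0 < del ->
        (forall h, h \in hs -> inLp q' h) ->
        exists2 f, A f & forall h, h \in hs ->
          `| fine (\int[P0]_x ((f x - g x) * h x)%:E) | < del.

Definition standing_assumption (eps : R) (rho : (T -> R) -> R) : Prop :=
  (exists M : R, forall f, repD eps rho f ->
      inLp (1 + 2 / eps) f /\ (Lnorm P0 (1 + 2 / eps)%:E (EFin \o f) <= M%:E)%E)
  /\ weakly_compact (1 + 2 / eps) (1 + eps / 2) (repD eps rho).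

End Defs.

From HB Require Import structures.
From mathcomp Require Import all_boot all_order all_algebra.
From mathcomp Require Import all_classical all_reals all_analysis.
From mathcomp Require Import measurable_realfun ring lra.
Import Order.TTheory GRing.Theory Num.Theory.
Local Open Scope classical_set_scope.
Local Open Scope ring_scope.

(* Stability puts [fbar := f / fC], with [fC = E_P0[f | C]], in the
   representation set, so it remains to show [E_P0[xi f / fC] = E_P0[eta]].
   If nonnegative [w1], [w2] have the same integral over every set of [C], then
   [E_P0[h w1] = E_P0[h w2]] for every nonnegative [C]-measurable [h] (for
   simple [h] by linearity, then by monotone convergence). Applied to [(f, fC)]
   and to the positive and negative parts of [(eta f, xi f)], with
   [h = 1_A / fC], this yields for every [A] in [C]
     [E_P0[1_A eta^+] + E_P0[1_A (xi f / fC)^-]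
        = E_P0[1_A (xi f / fC)^+] + E_P0[1_A eta^-]].
   Since [eta] is [C]-measurable, [A = {eta >= 0}] and [A = {eta <= 0}] show
   that [eta^+] and [eta^-] are integrable, and [A = Omega] gives the claim.
   Properness is what makes [fC > 0] almost surely: [f >= 0] and
   [E_P0[f 1_{fC <= 0}] = E_P0[fC 1_{fC <= 0}] <= 0] force [P0(fC <= 0) = 0]. *)

Lemma measurable_inv (R : realType) : measurable_fun [set: R] (@GRing.inv R).
Proof.
have -> : [set: R] = ~` [set 0] `|` [set 0] by rewrite setvU.
apply/(measurable_funU _ (measurableC (measurable_set1 0)) (measurable_set1 0)).
split; last exact: measurable_fun_set1.
apply: open_continuous_measurable_fun; first by rewrite openC; exact: closed_eq.
by move=> x; rewrite inE => /eqP x0; exact: inv_continuous.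
Qed.

Lemma fin_num_subeE (R : realType) (a b c e : \bar R) :
  a \is a fin_num -> b \is a fin_num -> c \is a fin_num -> e \is a fin_num ->
  (a - b = c - e)%E <-> (a + e = c + b)%E.
Proof.
move: a b c e => [a| |] [b| |] [c| |] [e| |] //= _ _ _ _.
by split=> -[] h; congr EFin; lra.
Qed.

Lemma maxr0_pMr (R : realDomainType) (u c : R) : 0 <= c ->
  Num.max (u * c) 0 = Num.max u 0 * c.
Proof. by move=> c0; rewrite maxr_pMl // mul0r. Qed.

Section real_integral.
Context {R : realType} {d : measure_display} {T : measurableType d}.
Variable mu : {measure set T -> \bar R}.

Lemma integralE_funrposneg (D : set T) (g : T -> R) :
  (\int[mu]_(x in D) (g x)%:E =
   \int[mu]_(x in D) (g^\+ x)%:E - \int[mu]_(x in D) (g^\- x)%:E)%E.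
Proof.
by rewrite integralE -[fun x => (g x)%:E]/(EFin \o g) funerpos funerneg.
Qed.

Lemma integral_indicM (A : set T) (g : T -> R) :
  (\int[mu]_x (\1_A x * g x)%:E = \int[mu]_(x in A) (g x)%:E)%E.
Proof.
rewrite [RHS]integral_mkcond epatch_indic; apply: eq_integral => x _ /=.
by rewrite -EFinM mulrC.
Qed.

Lemma integrable_funrpos_fin_num (D : set T) (g : T -> R) : measurable D ->
  mu.-integrable D (EFin \o g) ->
  (\int[mu]_(x in D) (g^\+ x)%:E \is a fin_num)%E.
Proof. by move=> mD /(integrable_pos_fin_num mD); rewrite funerpos. Qed.

Lemma integrable_funrneg_fin_num (D : set T) (g : T -> R) : measurable D ->
  mu.-integrable D (EFin \o g) ->
  (\int[mu]_(x in D) (g^\- x)%:E \is a fin_num)%E.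
Proof. by move=> mD /(integrable_neg_fin_num mD); rewrite funerneg. Qed.

Lemma ge0_integralD_EFin (D : set T) (u v : T -> R) : measurable D ->
  measurable_fun D u -> measurable_fun D v ->
  (forall x, D x -> 0 <= u x) -> (forall x, D x -> 0 <= v x) ->
  (\int[mu]_(x in D) (u x + v x)%:E =
   \int[mu]_(x in D) (u x)%:E + \int[mu]_(x in D) (v x)%:E)%E.
Proof.
move=> mD m_u m_v u0 v0; under eq_integral do rewrite EFinD.
by apply: ge0_integralD => //; exact/measurable_EFinP.
Qed.

Lemma integral_supp (D : set T) (g : T -> \bar R) :
  (forall x, ~ D x -> g x = 0%E) -> (\int[mu]_x g x = \int[mu]_(x in D) g x)%E.
Proof.
move=> g0; rewrite [RHS]integral_mkcond; apply: eq_integral => x _.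
by rewrite patchE; case: ifPn => // xD; rewrite g0 // -notin_setE.
Qed.

End real_integral.

Section sub_sigma_algebra.
Context {R : realType} {d : measure_display} {T : measurableType d}.
Context {C : set (set T)}.
Hypothesis C_sigma : sigma_algebra setT C.
Hypothesis C_sub : C `<=` measurable.
Local Notation TC := (g_sigma_algebraType C).

Lemma measurable_sub_sigma (A : set TC) : measurable A -> C A.
Proof. by move=> mA; rewrite -(sigma_algebra_id C_sigma). Qed.

Lemma C_measurableP (g : T -> R) :
  C_measurable C g <-> measurable_fun [set: TC] (g : TC -> R).
Proof.
split=> [gC _ B mB|mg B mB].
  by rewrite setTI; apply: sub_gen_smallest; exact: gC.
by apply: measurable_sub_sigma; rewrite -[_ @^-1` _]setTI; exact: mg.
Qed.

Lemma measurable_fun_sub_sigma {g : T -> R} :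
  measurable_fun [set: TC] (g : TC -> R) -> measurable_fun [set: T] g.
Proof. by move=> /C_measurableP gC _ B mB; rewrite setTI; exact/C_sub/gC. Qed.

Variable mu : {measure set T -> \bar R}.

Import HBNNSimple.

Lemma ge0_integral_nnsfunM (h : {nnsfun TC >-> R}) (w : T -> R) :
  measurable_fun setT w -> (forall x, 0 <= w x) ->
  (\int[mu]_x (h x * w x)%:E = \sum_(k \in range h)
     k%:E * \int[mu]_(x in (h : T -> R) @^-1` [set k]) (w x)%:E)%E.
Proof.
move=> mw w0.
have mh : measurable_fun [set: T] (h : T -> R).
  exact: measurable_fun_sub_sigma.
have mlevel k : measurable ((h : T -> R) @^-1` [set k]).
  by rewrite -[X in measurable X]setTI; exact: mh.
under eq_integral => x _.
  by rewrite (fimfunE h x) mulrC fsbig_distrr //= -fsumEFin //; over.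
rewrite ge0_integral_fsum //; last 2 first.
- move=> k; apply/measurable_EFinP/measurable_funM => //.
  exact/measurable_funM/measurable_indic.
- by move=> k x _; rewrite lee_fin mulr_ge0 //; exact: nnfun_muleindic_ge0.
apply: eq_fsbigr => k /= /set_mem [y _ <-].
rewrite -ge0_integralZl_EFin //; last 2 first.
- by move=> x _; rewrite lee_fin.
- exact/measurable_EFinP/measurable_funTS.
rewrite [RHS]integral_mkcond epatch_indic.
by apply: eq_integral => x _ /=; rewrite -!EFinM mulrCA mulrA.
Qed.

Section ge0_sub_sigma.
Variables w1 w2 : T -> R.
Hypotheses (mw1 : measurable_fun setT w1) (mw2 : measurable_fun setT w2).
Hypotheses (w1_ge0 : forall x, 0 <= w1 x) (w2_ge0 : forall x, 0 <= w2 x).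
Hypothesis w12 : forall A, C A ->
  (\int[mu]_(x in A) (w1 x)%:E = \int[mu]_(x in A) (w2 x)%:E)%E.

Lemma ge0_integralM_sub_sigma (h : T -> R) :
  measurable_fun [set: TC] (h : TC -> R) -> (forall x, 0 <= h x) ->
  (\int[mu]_x (h x * w1 x)%:E = \int[mu]_x (h x * w2 x)%:E)%E.
Proof.
move=> mh h0.
have mhE : measurable_fun [set: TC] (EFin \o h : TC -> \bar R).
  exact/measurable_EFinP.
pose hn := nnsfun_approx (@measurableT _ TC) mhE.
have approx (w : T -> R) : measurable_fun setT w -> (forall x, 0 <= w x) ->
    (\int[mu]_x (h x * w x)%:E =
     limn (fun n => \int[mu]_x (hn n x * w x)%:E))%E.
  move=> mw w0; rewrite -monotone_convergence //; last 3 first.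
  - move=> n; apply/measurable_EFinP/measurable_funM => //.
    exact/measurable_fun_sub_sigma/measurable_funP.
  - by move=> n x _; rewrite lee_fin mulr_ge0.
  - move=> x _ m n mn; rewrite lee_fin ler_wpM2r //.
    by have /lefP := nd_nnsfun_approx measurableT mhE mn; exact.
  apply: eq_integral => x _; apply/esym/cvg_lim => //.
  rewrite EFinM; under eq_fun do rewrite EFinM.
  exact/cvgeZr/(cvg_nnsfun_approx measurableT mhE (fun y _ => h0 y)).
rewrite (approx _ mw1 w1_ge0) (approx _ mw2 w2_ge0); congr (limn _).
apply/funext => n; rewrite !ge0_integral_nnsfunM //.
apply: eq_fsbigr => k _; congr (_ * _)%E; apply/w12/measurable_sub_sigma.
by rewrite -[X in measurable X]setTI; exact: measurable_funP.
Qed.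

End ge0_sub_sigma.

Lemma integral_funrposnegM_sub_sigma (w1 w2 h : T -> R) :
  mu.-integrable setT (EFin \o w1) -> mu.-integrable setT (EFin \o w2) ->
  (forall A, C A ->
    (\int[mu]_(x in A) (w1 x)%:E = \int[mu]_(x in A) (w2 x)%:E)%E) ->
  measurable_fun [set: TC] (h : TC -> R) -> (forall x, 0 <= h x) ->
  (\int[mu]_x (h x * w1^\+ x)%:E + \int[mu]_x (h x * w2^\- x)%:E =
   \int[mu]_x (h x * w2^\+ x)%:E + \int[mu]_x (h x * w1^\- x)%:E)%E.
Proof.
move=> iw1 iw2 w12 mh h0.
have /measurable_EFinP mw1 := measurable_int mu iw1.
have /measurable_EFinP mw2 := measurable_int mu iw2.
have mhT := measurable_fun_sub_sigma mh.
have [mw1p mw1n] := (measurable_funrpos mw1, measurable_funrneg mw1).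
have [mw2p mw2n] := (measurable_funrpos mw2, measurable_funrneg mw2).
rewrite -!ge0_integralD_EFin //; first last.
all: try by move=> x _; rewrite mulr_ge0 ?funrpos_ge0 ?funrneg_ge0.
all: try exact: measurable_funM.
under eq_integral do rewrite -mulrDr.
under [RHS]eq_integral do rewrite -mulrDr.
apply: ge0_integralM_sub_sigma => //; try exact: measurable_funD.
1,2: by move=> x; rewrite addr_ge0 ?funrpos_ge0 ?funrneg_ge0.
move=> A CA; have mA := C_sub _ CA.
rewrite !ge0_integralD_EFin //; try exact: measurable_funTS.
all: try by move=> x _; rewrite ?funrpos_ge0 ?funrneg_ge0.
have iw1A := integrableS measurableT mA (subsetT A) iw1.
have iw2A := integrableS measurableT mA (subsetT A) iw2.
have := w12 _ CA.
rewrite (integralE_funrposneg _ _ w1) (integralE_funrposneg _ _ w2).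
move/fin_num_subeE; apply.
- exact: integrable_funrpos_fin_num.
- exact: integrable_funrneg_fin_num.
- exact: integrable_funrpos_fin_num.
- exact: integrable_funrneg_fin_num.
Qed.

Lemma cond_density_gt0_ae (f fC : T -> R) : measurable_fun setT f ->
  measurable_fun [set: TC] (fC : TC -> R) -> mu.-integrable setT (EFin \o fC) ->
  (\forall x \ae mu, 0 <= f x) ->
  (forall A, C A ->
    (\int[mu]_(x in A) (fC x)%:E = \int[mu]_(x in A) (f x)%:E)%E) ->
  (forall N, measurable N ->
    (\int[mu]_(x in N) (f x)%:E = 0)%E -> mu N = 0%E) ->
  \forall x \ae mu, 0 < fC x.
Proof.
move=> mf mfC fC_int f_ge0 fC_cond f_null.
pose N := fC @^-1` `]-oo, 0].
have CN : C N by apply: (C_measurableP fC).2 => //; exact: measurable_itv.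
have mN := C_sub _ CN.
have : (\int[mu]_(x in N) (f x)%:E = 0)%E.
  apply/eqP; rewrite eq_le; apply/andP; split.
  - rewrite -fC_cond // -(integral0 mu N); apply: le_integral => //.
    + exact: integrableS fC_int.
    + exact: integrable0.
    + by move=> x; rewrite inE /N /preimage /= in_itv /= lee_fin.
  - rewrite (@ae_eq_integral _ _ _ mu N (fun x => (f^\+ x)%:E)) //.
    + by apply: integral_ge0 => x _; rewrite lee_fin funrpos_ge0.
    + exact/measurable_EFinP/measurable_funTS.
    + exact/measurable_EFinP/measurable_funTS/measurable_funrpos.
    + by apply: filterS f_ge0 => x fx0 _; rewrite /funrpos /= (max_idPl fx0).
move=> /(f_null _ mN) muN0; exists N; split => // x /=.
by rewrite /N /preimage /= in_itv /= leNgt => /negP.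
Qed.

Section density_ratio.
Variables f fC xi eta : T -> R.
Hypotheses (mf : measurable_fun setT f) (mxi : measurable_fun setT xi).
Hypothesis mfC : measurable_fun [set: TC] (fC : TC -> R).
Hypothesis meta : measurable_fun [set: TC] (eta : TC -> R).
Hypothesis fC_cond : forall A, C A ->
  (\int[mu]_(x in A) (fC x)%:E = \int[mu]_(x in A) (f x)%:E)%E.
Hypothesis eta_cond : forall A, C A ->
  (\int[mu]_(x in A) (eta x * f x)%:E = \int[mu]_(x in A) (xi x * f x)%:E)%E.
Hypothesis xif_int : mu.-integrable setT (fun x => (xi x * f x)%:E).
Hypothesis etaf_int : mu.-integrable setT (fun x => (eta x * f x)%:E).
Let xig x := xi x * (f x / fC x).
Hypothesis xig_int : mu.-integrable setT (EFin \o xig).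
Hypothesis f_fC_pos : \forall x \ae mu, 0 <= f x /\ 0 < fC x.

Let mfCT : measurable_fun setT fC := measurable_fun_sub_sigma mfC.
Let metaT : measurable_fun setT eta := measurable_fun_sub_sigma meta.

Lemma ae_pos_eq_integral (D : set T) (g1 g2 : T -> R) : measurable D ->
  measurable_fun D g1 -> measurable_fun D g2 ->
  (forall x, 0 <= f x -> 0 < fC x -> g1 x = g2 x) ->
  (\int[mu]_(x in D) (g1 x)%:E = \int[mu]_(x in D) (g2 x)%:E)%E.
Proof.
move=> mD mg1 mg2 g12; apply: ae_eq_integral => //; try exact/measurable_EFinP.
by apply: filterS f_fC_pos => x [fx0 fCx0] _; rewrite g12.
Qed.

Lemma integralM_cond_density (h : T -> R) :
  measurable_fun [set: TC] (h : TC -> R) -> (forall x, 0 <= h x) ->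
  (\int[mu]_x (h x * f x)%:E = \int[mu]_x (h x * fC x)%:E)%E.
Proof.
move=> mh h0; have mhT := measurable_fun_sub_sigma mh.
have [mfp mfCp] := (measurable_funrpos mf, measurable_funrpos mfCT).
have f_pos x : 0 <= f x -> f^\+ x = f x by move=> fx0; exact/max_idPl.
have fC_pos x : 0 < fC x -> fC^\+ x = fC x by move=> fCx0; exact/max_idPl/ltW.
have mhM g : measurable_fun setT g -> measurable_fun setT (fun x => h x * g x).
  exact: measurable_funM.
transitivity (\int[mu]_x (h x * f^\+ x)%:E)%E.
  apply: ae_pos_eq_integral => //; try exact: mhM.
  by move=> x /f_pos ->.
transitivity (\int[mu]_x (h x * fC^\+ x)%:E)%E; last first.
  apply: ae_pos_eq_integral => //; try exact: mhM.
  by move=> x _ /fC_pos ->.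
apply: ge0_integralM_sub_sigma => //; try exact: funrpos_ge0.
move=> A CA; have mA := C_sub _ CA.
transitivity (\int[mu]_(x in A) (f x)%:E)%E.
  apply: ae_pos_eq_integral => //; try exact: measurable_funTS.
  by move=> x /f_pos ->.
rewrite -fC_cond //.
apply: ae_pos_eq_integral => //; try exact: measurable_funTS.
by move=> x _ /fC_pos ->.
Qed.

(* [fC^+] instead of [fC] keeps [q] nonnegative on the null set where
   [fC <= 0]. *)
Let q x := (fC^\+ x)^-1.

Let mq : measurable_fun [set: TC] (q : TC -> R).
Proof. exact/(measurableT_comp (measurable_inv R))/measurable_funrpos. Qed.

Let q_ge0 x : 0 <= q x.
Proof. by rewrite invr_ge0 funrpos_ge0. Qed.

Let q_fC x : 0 < fC x -> q x * fC x = 1.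
Proof.
by move=> fCx0; rewrite /q /funrpos /= (max_idPl (ltW fCx0)) mulVf ?gt_eqF.
Qed.

Lemma integral_inv_cond_density (u : T -> R) :
  measurable_fun [set: TC] (u : TC -> R) -> (forall x, 0 <= u x) ->
  (\int[mu]_x (q x * u x * f x)%:E = \int[mu]_x (u x)%:E)%E.
Proof.
move=> m_u u0; rewrite integralM_cond_density //; last 2 first.
- exact: measurable_funM.
- by move=> x; rewrite mulr_ge0.
apply: ae_pos_eq_integral => //.
- apply/measurable_funM/mfCT; exact/measurable_fun_sub_sigma/measurable_funM.
- exact: measurable_fun_sub_sigma.
by move=> x _ fCx0; rewrite mulrAC q_fC ?mul1r.
Qed.

Let mxig : measurable_fun setT xig.
Proof.
exact/measurable_funM/measurable_funM/(measurableT_comp (measurable_inv R)).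
Qed.

Let q_ratio u x : 0 < fC x ->
  q x * Num.max (u * f x) 0 = Num.max (u * (f x / fC x)) 0.
Proof.
move=> fCx0; rewrite /q /funrpos (max_idPl (ltW fCx0)) mulrC.
by rewrite -maxr0_pMr ?mulrA // invr_ge0 ltW.
Qed.

Lemma integral_inv_indic_ratio (A : set T) (v w : T -> R) : measurable A ->
  measurable_fun setT v -> measurable_fun setT w ->
  (forall x, 0 <= f x -> 0 < fC x -> q x * v x = w x) ->
  (\int[mu]_x (q x * \1_A x * v x)%:E = \int[mu]_(x in A) (w x)%:E)%E.
Proof.
move=> mA mv mw vw; rewrite -integral_indicM.
have mqT := measurable_fun_sub_sigma mq.
have mAT : measurable_fun setT (\1_A : T -> R) by exact: measurable_indic.
apply: ae_pos_eq_integral => //; try by do 3?apply: measurable_funM.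
by move=> x fx0 fCx0; rewrite -vw //; ring.
Qed.

Lemma integral_inv_indic_cond (A : set T) (v u : T -> R) : C A ->
  measurable_fun setT v -> measurable_fun [set: TC] (u : TC -> R) ->
  (forall x, 0 <= u x) -> (forall x, 0 <= f x -> v x = u x * f x) ->
  (\int[mu]_x (q x * \1_A x * v x)%:E = \int[mu]_(x in A) (u x)%:E)%E.
Proof.
move=> CA mv m_u u0 vu; rewrite -integral_indicM.
have mAC : measurable_fun [set: TC] (\1_A : TC -> R).
  by apply: measurable_indic; exact: sub_gen_smallest.
rewrite -(integral_inv_cond_density (fun x => \1_A x * u x)); last 2 first.
- exact: measurable_funM.
- by move=> x; rewrite mulr_ge0.
have mqT := measurable_fun_sub_sigma mq.
have [mAT m_uT] := (measurable_fun_sub_sigma mAC, measurable_fun_sub_sigma m_u).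
apply: ae_pos_eq_integral => //; try by do 3?apply: measurable_funM.
by move=> x fx0 _; rewrite vu //; ring.
Qed.

Lemma integral_cond_ratio_split A : C A ->
  (\int[mu]_(x in A) (eta^\+ x)%:E + \int[mu]_(x in A) (xig^\- x)%:E =
   \int[mu]_(x in A) (xig^\+ x)%:E + \int[mu]_(x in A) (eta^\- x)%:E)%E.
Proof.
move=> CA; have mA := C_sub _ CA.
have mhA : measurable_fun [set: TC] ((fun x => q x * \1_A x) : TC -> R).
  by apply/measurable_funM/measurable_indic => //; exact: sub_gen_smallest.
have hA0 x : 0 <= q x * \1_A x by rewrite mulr_ge0.
have metaf : measurable_fun setT (fun x => eta x * f x).
  exact: measurable_funM.
have mxif : measurable_fun setT (fun x => xi x * f x) by exact: measurable_funM.
move: (integral_funrposnegM_sub_sigma (fun x => eta x * f x)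
  (fun x => xi x * f x) _ etaf_int xif_int eta_cond mhA hA0) => /=.
rewrite (integral_inv_indic_cond A (fun x => eta x * f x)^\+ eta^\+ CA) //;
  first last.
- by move=> x fx0; rewrite /funrpos maxr0_pMr.
- exact: measurable_funrpos.
- exact: measurable_funrpos.
rewrite (integral_inv_indic_cond A (fun x => eta x * f x)^\- eta^\- CA) //;
  first last.
- by move=> x fx0; rewrite /funrneg -mulNr maxr0_pMr.
- exact: measurable_funrneg.
- exact: measurable_funrneg.
rewrite (integral_inv_indic_ratio A (fun x => xi x * f x)^\+ xig^\+ mA) //;
  first last.
- by move=> x _ fCx0; rewrite /funrpos q_ratio.
- exact: measurable_funrpos.
- exact: measurable_funrpos.
rewrite (integral_inv_indic_ratio A (fun x => xi x * f x)^\- xig^\- mA) //;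
  first last.
- by move=> x _ fCx0; rewrite /funrneg /xig -!mulNr q_ratio.
- exact: measurable_funrneg.
- exact: measurable_funrneg.
Qed.

Let C_sign (B : set R) : measurable B -> C (eta @^-1` B).
Proof. exact: (C_measurableP eta).2. Qed.

Let xig_fin_num {A : set T} : measurable A ->
  (\int[mu]_(x in A) (xig^\+ x)%:E \is a fin_num /\
   \int[mu]_(x in A) (xig^\- x)%:E \is a fin_num)%E.
Proof.
move=> mA; have := integrableS measurableT mA (subsetT A) xig_int.
by split; [exact: integrable_funrpos_fin_num|exact: integrable_funrneg_fin_num].
Qed.

Lemma integral_cond_funrpos_fin_num :
  (\int[mu]_x (eta^\+ x)%:E \is a fin_num)%E.
Proof.
pose Ap := eta @^-1` `[0, +oo[.
have CAp : C Ap by apply: C_sign; exact: measurable_itv.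
have [fin_p _] := xig_fin_num (C_sub _ CAp).
rewrite ge0_fin_numE; last first.
  by apply: integral_ge0 => x _; rewrite lee_fin funrpos_ge0.
rewrite (integral_supp mu Ap); last first.
  move=> x /= /negP; rewrite in_itv /= andbT -ltNge => eta0.
  by rewrite /funrpos (max_idPr (ltW eta0)).
have neg0 : (\int[mu]_(x in Ap) (eta^\- x)%:E = 0)%E.
  apply: integral0_eq => x; rewrite /Ap /= in_itv /= andbT => eta0.
  by rewrite /funrneg (max_idPr _) // oppr_le0.
have := integral_cond_ratio_split Ap CAp; rewrite neg0 adde0 => e.
apply: (@le_lt_trans _ _ (\int[mu]_(x in Ap) (xig^\+ x)%:E)%E).
  rewrite -e leeDl //.
  by apply: integral_ge0 => x _; rewrite lee_fin funrneg_ge0.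
by rewrite ltey_eq fin_p.
Qed.

Lemma integral_cond_funrneg_fin_num :
  (\int[mu]_x (eta^\- x)%:E \is a fin_num)%E.
Proof.
pose An := eta @^-1` `]-oo, 0].
have CAn : C An by apply: C_sign; exact: measurable_itv.
have [_ fin_n] := xig_fin_num (C_sub _ CAn).
rewrite ge0_fin_numE; last first.
  by apply: integral_ge0 => x _; rewrite lee_fin funrneg_ge0.
rewrite (integral_supp mu An); last first.
  move=> x /= /negP; rewrite in_itv /= -ltNge => eta0.
  by rewrite /funrneg (max_idPr _) // oppr_le0 ltW.
have pos0 : (\int[mu]_(x in An) (eta^\+ x)%:E = 0)%E.
  apply: integral0_eq => x; rewrite /An /= in_itv /= => eta0.
  by rewrite /funrpos (max_idPr _).
have := integral_cond_ratio_split An CAn; rewrite pos0 add0e => e.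
apply: (@le_lt_trans _ _ (\int[mu]_(x in An) (xig^\- x)%:E)%E).
  rewrite e leeDr //.
  by apply: integral_ge0 => x _; rewrite lee_fin funrpos_ge0.
by rewrite ltey_eq fin_n.
Qed.

Lemma integral_cond_ratio :
  (\int[mu]_x (xig x)%:E = \int[mu]_x (eta x)%:E)%E.
Proof.
have [fin_p fin_n] := xig_fin_num (@measurableT _ T).
have CT : C setT := measurable_sub_sigma [set: TC] measurableT.
have := integral_cond_ratio_split setT CT.
rewrite (integralE_funrposneg mu setT xig) (integralE_funrposneg mu setT eta).
move=> e; apply/fin_num_subeE => //.
- exact: integral_cond_funrpos_fin_num.
- exact: integral_cond_funrneg_fin_num.
Qed.

End density_ratio.

End sub_sigma_algebra.

Lemma cond_exp_cst1E {R : realType} {d : measure_display} {T : measurableType d}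
    {P : probability T R} {C : set (set T)} {f fC : T -> R} :
  cond_exp P C (cst 1) f fC ->
  [/\ C_measurable C fC, P.-integrable setT (EFin \o fC) &
     forall A, C A ->
       (\int[P]_(x in A) (fC x)%:E = \int[P]_(x in A) (f x)%:E)%E].
Proof.
case=> fC_C fC_int fC_cond; split => // [|A CA].
- by apply: eq_integrable fC_int => // x _; rewrite /= mulr1.
- transitivity (\int[P]_(x in A) (fC x * cst 1 x)%:E)%E.
    by apply: eq_integral => x _; rewrite /= mulr1.
  by rewrite fC_cond //; apply: eq_integral => x _; rewrite /= mulr1.
Qed.

Theorem proposition1 (R : realType) (d : measure_display) (T : measurableType d)
  (P0 : probability T R) (eps : R) (C : set (set T)) (rho : (T -> R) -> R) :
  measure_is_complete P0 ->
  0 < eps < 1 ->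
  is_sub_sigma_algebra C ->
  sublinear_op P0 (2 + eps) rho ->
  standing_assumption P0 eps rho ->
  stable P0 eps C rho ->
  proper_op P0 eps rho ->
  forall f, repD P0 eps rho f ->
  forall xi : T -> R, measurable_fun setT xi ->
    P0.-integrable setT (EFin \o xi) ->
    (forall g, repD P0 eps rho g ->
       P0.-integrable setT (fun x => (xi x * g x)%:E)) ->
  forall eta, cond_exp P0 C f xi eta ->
  exists2 fbar, repD P0 eps rho fbar &
    (\int[P0]_x (xi x * fbar x)%:E = \int[P0]_x (eta x)%:E)%E.
Proof.
move=> _ _ [C_sigma C_sub] _ _ stab prop f Df xi mxi _ xi_int eta.
case=> /(C_measurableP C_sigma _) meta etaf_int eta_cond.
have [fC fC_condexp Dfbar] := stab f Df.
have [/(C_measurableP C_sigma _) mfC fC_int fC_cond] :=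
  cond_exp_cst1E fC_condexp.
exists (fun x => f x / fC x) => //.
have [[mf f_ge0 _] _] := Df.
have fC_gt0 := cond_density_gt0_ae C_sigma C_sub P0 f fC mf mfC fC_int f_ge0
  fC_cond (fun N mN => (prop f Df N mN).2).
apply: (integral_cond_ratio C_sigma C_sub) => //.
- exact: xi_int.
- exact: xi_int Dfbar.
- by apply: filterS2 f_ge0 fC_gt0.
Qed.
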